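(* Fix $\epsilon>0$, integers $2\le k\le n$, terminals $T=\{s_1,\dots,s_k\}\subseteq[n]$, and a cost function $c$. Let $\hat x^*$ be the output of the mechanism that samples independent $Z_{\{t,u\}}\sim\mathsf{Lap}(\sqrt2k/\epsilon)$ for every $t\in T$, $u\in[n]\setminus T$ and returns an optimal solution of $$\min_{x}\ \sum_{\{u,v\},u\neq v}c(u,v)\|x_u-x_v\|_1+\sum_{t\in T}\sum_{u\in[n]\setminus T}Z_{\{t,u\}}\|x_t-x_u\|_1\quad\text{s.t. } x_{s_i}=\mathbf{e}_i\ (i\in[k]),\ x_u\in\Delta_k\ (u\in[n]).$$ Then $\mathbb{E}[\mathcal{E}(\hat x^* )]-\mathsf{OPT}(c,n,k)\le O\!\left(\frac{nk\log k}{\epsilon}\right)$, and with high probability $\mathcal{E}(\hat x^* )-\mathsf{OPT}(c,n,k)\le O\!\left(\frac{nk\log(nk)}{\epsilon}\right)$.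
   Context: $\Delta_k=\{x\in\mathbb{R}^k_{\ge0}:\sum_{i}x^{(i)}=1\}$; $\mathbf{e}_i$ is the $i$-th standard basis vector. A cost function is a symmetric $c:[n]\times[n]\to\mathbb{R}_{\ge0}$. For $x\in(\Delta_k)^n$, $\mathcal{E}(x)=\sum_{\{u,v\},u\ne v}c(u,v)\|x_u-x_v\|_1$, and $\mathsf{OPT}(c,n,k)$ is the minimum of $\mathcal{E}(x)$ over $x\in(\Delta_k)^n$ with $x_{s_i}=\mathbf{e}_i$ for all $i$. $\mathsf{Lap}(b)$ is the Laplace distribution with density $\frac1{2b}e^{-|x|/b}$. *)

From HB Require Import structures.
From mathcomp Require Import all_boot all_order all_algebra.
From mathcomp Require Import all_classical all_reals all_analysis.
Set Implicit Arguments. Unset Strict Implicit. Unset Printing Implicit Defensive.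
Import Order.TTheory GRing.Theory Num.Theory.
Local Open Scope classical_set_scope.
Local Open Scope ring_scope.

Section Defs.
Variable R : realType.

Definition ebasis (k : nat) (i : 'I_k) : 'I_k -> R :=
  fun j => if j == i then 1 else 0.

Definition in_simplex (k : nat) (y : 'I_k -> R) : Prop :=
  (forall j, 0 <= y j) /\ \sum_(j < k) y j = 1.

Definition l1dist (k : nat) (y z : 'I_k -> R) : R :=
  \sum_(j < k) `|y j - z j|.

Definition cost_fun (n : nat) (c : 'I_n -> 'I_n -> R) : Prop :=
  (forall u v, c u v = c v u) /\ (forall u v, 0 <= c u v).

Definition energy (n k : nat) (c : 'I_n -> 'I_n -> R)
    (x : 'I_n -> 'I_k -> R) : R :=
  \sum_(u < n) \sum_(v < n | (u < v)%N) c u v * l1dist (x u) (x v).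

Definition feasible (n k : nat) (s : 'I_k -> 'I_n)
    (x : 'I_n -> 'I_k -> R) : Prop :=
  (forall u, in_simplex (x u)) /\ (forall i, x (s i) = ebasis i).

Definition OPT (n k : nat) (c : 'I_n -> 'I_n -> R) (s : 'I_k -> 'I_n) : R :=
  inf [set energy c x | x in [set x | feasible s x]].

(* the noisy objective; noise z i u = Z_{s_i, u}, used only for u outside T *)
Definition noisy_obj (n k : nat) (c : 'I_n -> 'I_n -> R) (s : 'I_k -> 'I_n)
    (z : 'I_k -> 'I_n -> R) (x : 'I_n -> 'I_k -> R) : R :=
  energy c x +
  \sum_(i < k) \sum_(u < n | u \notin codom s) z i u * l1dist (x (s i)) (x u).

Definition is_noisy_opt (n k : nat) (c : 'I_n -> 'I_n -> R)
    (s : 'I_k -> 'I_n) (z : 'I_k -> 'I_n -> R) (x : 'I_n -> 'I_k -> R) : Prop :=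
  feasible s x /\
  forall y, feasible s y -> noisy_obj c s z x <= noisy_obj c s z y.

Definition laplace_pdf (b : R) (t : R) : R := (2 * b)^-1 * expR (- `|t| / b).

End Defs.

Section Prob.
Context {R : realType} {d : measure_display} {Omega : measurableType d}.

Definition is_laplace (P : probability Omega R) (X : Omega -> R) (b : R) : Prop :=
  measurable_fun setT X /\
  forall A : set R, measurable A ->
    P (X @^-1` A) = (\int[lebesgue_measure]_(t in A) (laplace_pdf b t)%:E)%E.

Definition mutually_independent (I : finType) (Q : pred I)
    (P : probability Omega R) (X : I -> Omega -> R) : Prop :=
  forall B : I -> set R, (forall i, measurable (B i)) ->
    P (\bigcap_(i in [set i | Q i]) (X i @^-1` B i)) =
    (\prod_(i | Q i) P (X i @^-1` B i))%E.
End Prob.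

(* For t >= 0 put Y_{i,u}(t) = (|Z_{i,u}| - t)_+.  Since l1dist e_i y = 2 - 2 y_i on the
   simplex, the noise term is affine on feasible points, and between two feasible points x, y
   the noisy objective and the energy differ by 2 sum_u sum_i Z_{i,u} (x_{u,i} - y_{u,i}),
   which is at most 4 (n t + sum Y_{i,u}(t)) because |Z| <= t + Y(t) and x_u, y_u are
   probability vectors.  Comparing the noisy optimum with every feasible point gives
   E(x^) - OPT <= 4 (n t + sum Y_{i,u}(t)) pointwise, for every t >= 0.
   For Lap(b) noise, P(|Z| > a) = exp(-a/b) and E[Y(t)] <= b exp(-t/b): the choice
   t = b ln k bounds the expectation, and t = 2 b ln (n k) together with a union bound over
   the n k noise variables gives the tail bound. *)

From HB Require Import structures.
From mathcomp Require Import all_boot all_order all_algebra.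
From mathcomp Require Import all_classical all_reals all_analysis.
From mathcomp Require Import measurable_realfun exponential_distribution.
From mathcomp Require Import ring lra.
Set Implicit Arguments. Unset Strict Implicit. Unset Printing Implicit Defensive.
Import Order.TTheory GRing.Theory Num.Theory.
Import numFieldTopology.Exports.
Local Open Scope classical_set_scope.
Local Open Scope ring_scope.

Section simplex.
Variable R : realType.

Lemma simplex_le1 k (y : 'I_k -> R) i : in_simplex y -> y i <= 1.
Proof.
move=> [y0 ys]; rewrite -ys (bigD1 i) //= lerDl.
by apply: sumr_ge0 => j _; exact: y0.
Qed.

Lemma l1dist_ebasis k (i : 'I_k) (y : 'I_k -> R) :
  in_simplex y -> l1dist (ebasis R i) y = 2 - 2 * y i.
Proof.
move=> hy; have [y0 ys] := hy.
rewrite /l1dist (bigD1 i) //= /ebasis eqxx.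
rewrite (eq_bigr (fun j => y j)); last first.
  by move=> j /negbTE ->; rewrite sub0r normrN ger0_norm.
have -> : \sum_(j < k | j != i) y j = 1 - y i.
  by move: ys; rewrite (bigD1 i) //= => <-; ring.
rewrite ger0_norm ?subr_ge0 ?simplex_le1 //; ring.
Qed.

End simplex.

Section excess.
Variable R : realType.

Definition excess (t z : R) : R := Num.max (`|z| - t) 0.

Lemma excess_ge0 t z : 0 <= excess t z.
Proof. by rewrite /excess le_max lexx orbT. Qed.

Lemma ler_norm_excess t z : `|z| <= t + excess t z.
Proof. by rewrite /excess -lerBlDl le_max lexx. Qed.

Lemma excessN t z : excess t (- z) = excess t z.
Proof. by rewrite /excess normrN. Qed.

Lemma excess_eq0 t z : `|z| <= t -> excess t z = 0.
Proof. by move=> zt; apply/max_idPr; rewrite subr_le0. Qed.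

Lemma sum_mul_simplex_le k (z x : 'I_k -> R) t :
  in_simplex x -> 0 <= t -> \sum_i z i * x i <= t + \sum_i excess t (z i).
Proof.
move=> hx t0; have [x0 xs] := hx.
apply: (@le_trans _ _ (\sum_i (t * x i + excess t (z i) * x i))).
  apply: ler_sum => i _; rewrite -mulrDl; apply: ler_wpM2r; first exact: x0.
  exact: le_trans (ler_norm _) (ler_norm_excess _ _).
rewrite big_split /= -mulr_sumr xs mulr1 lerD2l.
apply: ler_sum => i _; rewrite -[leRHS]mulr1.
by apply: ler_wpM2l; [exact: excess_ge0 | exact: simplex_le1].
Qed.

Lemma sum_mul_simplex_sub_le k (z x y : 'I_k -> R) t :
  in_simplex x -> in_simplex y -> 0 <= t ->
  \sum_i z i * (x i - y i) <= 2 * (t + \sum_i excess t (z i)).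
Proof.
move=> hx hy t0.
have -> : \sum_i z i * (x i - y i) = \sum_i z i * x i + \sum_i (- z i) * y i.
  by rewrite -big_split /=; apply: eq_bigr => i _; rewrite mulrBr mulNr.
have := sum_mul_simplex_le z hx t0; have := sum_mul_simplex_le (fun i => - z i) hy t0.
under [X in _ <= _ + X]eq_bigr do rewrite excessN.
lra.
Qed.

End excess.

Section noisy_program.
Variables (R : realType) (n k : nat) (c : 'I_n -> 'I_n -> R) (s : 'I_k -> 'I_n).

Lemma energy_ge0 (x : 'I_n -> 'I_k -> R) : cost_fun c -> 0 <= energy c x.
Proof.
move=> [_ c0]; apply: sumr_ge0 => u _; apply: sumr_ge0 => v _.
by apply: mulr_ge0 => //; apply: sumr_ge0 => j _.
Qed.

Lemma OPT_ge0 : cost_fun c -> 0 <= OPT c s.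
Proof.
move=> cf; rewrite /OPT.
have [[x fx]|nofeas] := pselect (exists x : 'I_n -> 'I_k -> R, feasible s x).
  apply: lb_le_inf; first by exists (energy c x), x.
  by move=> _ [y _ <-]; exact: energy_ge0.
suff -> : [set energy c x | x in [set x | feasible s x]] = set0 by rewrite inf0.
by apply/seteqP; split => // e [x fx _]; apply: nofeas; exists x.
Qed.

Lemma noise_change (z : 'I_k -> 'I_n -> R) (x y : 'I_n -> 'I_k -> R) :
  feasible s x -> feasible s y ->
  (noisy_obj c s z y - energy c y) - (noisy_obj c s z x - energy c x) =
  2 * \sum_(u < n | u \notin codom s) \sum_i z i u * (x u i - y u i).
Proof.
move=> [xs xe] [ys ye]; rewrite /noisy_obj ![energy c _ + _]addrC !addrK -sumrB.
rewrite exchange_big mulr_sumr; apply: eq_bigr => u _.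
rewrite -sumrB mulr_sumr; apply: eq_bigr => i _.
by rewrite xe ye !l1dist_ebasis //; ring.
Qed.

Lemma noise_change_le (z : 'I_k -> 'I_n -> R) (x y : 'I_n -> 'I_k -> R) t :
  feasible s x -> feasible s y -> 0 <= t ->
  (noisy_obj c s z y - energy c y) - (noisy_obj c s z x - energy c x) <=
  4 * (n%:R * t + \sum_(u < n | u \notin codom s) \sum_i excess t (z i u)).
Proof.
move=> fx fy t0; rewrite noise_change //.
have [[xs _] [ys _]] := (fx, fy).
apply: (@le_trans _ _ (2 * \sum_(u < n | u \notin codom s)
    (2 * (t + \sum_i excess t (z i u))))).
  by apply: ler_wpM2l => //; apply: ler_sum => u _; exact: sum_mul_simplex_sub_le.
rewrite -mulr_sumr mulrA -natrM; apply: ler_wpM2l => //.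
rewrite big_split /= lerD2r.
apply: (@le_trans _ _ (\sum_(u < n) t)); last by rewrite sumr_const card_ord mulr_natl.
by rewrite [leRHS](bigID (fun u => u \notin codom s)) /= lerDl sumr_ge0.
Qed.

Lemma noisy_opt_energy_le (z : 'I_k -> 'I_n -> R) (x : 'I_n -> 'I_k -> R) t :
  is_noisy_opt c s z x -> 0 <= t ->
  energy c x - OPT c s <=
  4 * (n%:R * t + \sum_(u < n | u \notin codom s) \sum_i excess t (z i u)).
Proof.
move=> [fx xopt] t0; set B := (X in _ <= X).
suff : energy c x - B <= OPT c s by lra.
apply: lb_le_inf; first by exists (energy c x); exists x.
move=> _ [y fy <-]; have := xopt y fy; have := noise_change_le z fx fy t0.
rewrite -/B; lra.
Qed.

End noisy_program.

Section laplace.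
Variable R : realType.
Local Notation mu := (@lebesgue_measure R).

Lemma laplace_pdf_ge0 (b t : R) : 0 < b -> 0 <= laplace_pdf b t.
Proof. by move=> b0; rewrite mulr_ge0 ?expR_ge0 // invr_ge0 mulr_ge0 // ltW. Qed.

Lemma continuous_laplace_pdf (b : R) : continuous (laplace_pdf b).
Proof.
move=> x; rewrite /laplace_pdf.
apply: (@continuousM _ R^o (fun=> (2 * b)^-1) (fun x => expR (- `|x| / b))).
  exact: cst_continuous.
apply: continuous_comp; last exact: continuous_expR.
apply: (@continuousM _ R^o (fun x => - `|x|) (fun=> b^-1)); last exact: cst_continuous.
by apply: (@continuousN _ R^o); exact: norm_continuous.
Qed.

Lemma measurable_laplace_pdf (b : R) (D : set R) :
  measurable_fun D (fun x => (laplace_pdf b x)%:E).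
Proof.
apply/measurable_EFinP; apply: measurable_funTS.
exact: measurable_realfun.continuous_measurable_fun (@continuous_laplace_pdf b).
Qed.

Lemma laplace_pdf_exponential (b x : R) : 0 < b -> 0 <= x ->
  laplace_pdf b x = 2^-1 * exponential_pdf b^-1 x.
Proof.
move=> b0 x0; rewrite exponential_pdfE // /laplace_pdf ger0_norm // invfM -mulrA.
by congr (_ * (_ * expR _)); rewrite !mulNr mulrC.
Qed.

Lemma integral_laplace_pdf_0a (b a : R) : 0 < b -> 0 < a ->
  (\int[mu]_(x in `[0%R, a]) (laplace_pdf b x)%:E = (2^-1 * (1 - expR (- a / b)))%:E)%E.
Proof.
move=> b0 a0; under eq_integral => x.
  rewrite inE /= in_itv /= => /andP[x0 _].
  rewrite laplace_pdf_exponential // EFinM.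
  over.
rewrite ge0_integralZl //; last 2 first.
- by apply/measurable_EFinP; apply: measurable_funTS; exact: measurable_exponential_pdf.
- by move=> x _; rewrite lee_fin exponential_pdf_ge0 // invr_ge0 ltW.
have := exponential_prob_itv0c b^-1 a0; rewrite /exponential_prob => ->.
by rewrite -EFinB -EFinM !mulNr [b^-1 * a]mulrC.
Qed.

(* The density is even, so the mass of [-a, a] is twice that of [0, a]. *)
Lemma integral_laplace_pdf_sym (b a : R) : 0 < b -> 0 < a ->
  (\int[mu]_(x in `[(- a)%R, a]) (laplace_pdf b x)%:E = (1 - expR (- a / b))%:E)%E.
Proof.
move=> b0 a0.
have -> : `[(- a)%R, a]%classic = `[(- a)%R, 0%R]%classic `|` `]0%R, a]%classic.
  apply/seteqP; split => x /=; rewrite !in_itv /=.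
    by move=> /andP[h1 h2]; have [x0|x0] := leP x 0; [left; rewrite h1 | right; rewrite h2].
  by move=> [/andP[h1 h2]|/andP[h1 h2]]; rewrite ?h1 ?h2 /=; lra.
rewrite ge0_integral_setU //=; last 3 first.
- exact: measurable_laplace_pdf.
- by move=> x _; rewrite lee_fin laplace_pdf_ge0.
- apply/disj_setPS => x [] /=; rewrite !in_itv /=; lra.
rewrite integral_itv_obnd_cbnd; last exact: measurable_laplace_pdf.
have := @integration_by_substitution_oppr R (laplace_pdf b) 0 a (ltW a0).
rewrite oppr0 => ->; last first.
  by apply: continuous_subspaceT => x; exact: continuous_laplace_pdf.
under eq_integral => x _ do rewrite /= /laplace_pdf normrN.
by rewrite integral_laplace_pdf_0a // -EFinD; congr EFin; field.
Qed.

Lemma norm_gt_setC d (T : measurableType d) (X : T -> R) a :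
  [set w | a < `|X w|] = ~` (X @^-1` `[(- a)%R, a]).
Proof.
by apply/seteqP; split => w /=; rewrite in_itv /= ltNge ler_norml => /negP.
Qed.

Lemma measurable_norm_gt d (T : measurableType d) (X : T -> R) a :
  measurable_fun setT X -> measurable [set w | a < `|X w|].
Proof.
by move=> mX; rewrite norm_gt_setC; apply: measurableC; rewrite -[_ @^-1` _]setTI; exact: mX.
Qed.

Lemma laplace_tail d (T : measurableType d) (P : probability T R) (X : T -> R) (b a : R) :
  0 < b -> 0 < a -> is_laplace P X b ->
  P [set w | a < `|X w|] = (expR (- a / b))%:E.
Proof.
move=> b0 a0 [mX hX].
rewrite norm_gt_setC probability_setC; last by rewrite -[_ @^-1` _]setTI; exact: mX.
by rewrite hX // integral_laplace_pdf_sym // -EFinB; congr EFin; ring.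
Qed.

Lemma measurable_excess d (T : measurableType d) (X : T -> R) t :
  measurable_fun setT X -> measurable_fun setT (fun w => excess t (X w)).
Proof.
move=> mX; apply: (@measurable_maxr _ _ _ _ (fun w => `|X w| - t) (cst 0)).
  apply: measurable_funB; last exact: measurable_cst.
  exact: measurableT_comp (@normr_measurable R setT) mX.
exact: measurable_cst.
Qed.

(* Layer-cake formula: for [r >= 0], [P (excess t X > r) = exp (- (t + r) / b)],
   which is [b exp (- t / b)] times the exponential density of rate [1 / b]. *)
Lemma expectation_excess_laplace_le d (T : measurableType d) (P : probability T R)
    (X : T -> R) (b t : R) : 0 < b -> 0 < t -> is_laplace P X b ->
  (\int[P]_w (excess t (X w))%:E <= (b * expR (- t / b))%:E)%E.
Proof.
move=> b0 t0 hX; have [mX _] := hX.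
have mY : (fun w => excess t (X w)) \in mfun by rewrite inE; exact: measurable_excess.
pose Y : {RV P >-> R} := mfun_Sub mY.
have YE w : Y w = excess t (X w) by rewrite /Y mfun_valP.
have -> : (\int[P]_w (excess t (X w))%:E = 'E_P[Y])%E.
  by rewrite expectation_def; apply: eq_integral => w _; rewrite YE.
rewrite ge0_expectation_ccdf; last by move=> w; rewrite YE excess_ge0.
have mE : measurable_fun (`[0%R, +oo[%classic : set R) (fun x => (exponential_pdf b^-1 x)%:E).
  by apply/measurable_EFinP; apply: measurable_funTS; exact: measurable_exponential_pdf.
under eq_integral => r.
  rewrite inE /= in_itv /= andbT => r0.
  have -> : ccdf Y r = ((b * expR (- t / b))%:E * (exponential_pdf b^-1 r)%:E)%E.
    rewrite /ccdf /distribution /pushforward.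
    have -> : Y @^-1` `]r, +oo[ = [set w | t + r < `|X w|].
      apply/seteqP; split => w /=; rewrite in_itv /= andbT /excess lt_max.
        by rewrite (ltNge r 0) r0 orbF; lra.
      by move=> h; apply/orP; left; lra.
    rewrite (laplace_tail b0 _ hX); last lra.
    rewrite -EFinM exponential_pdfE //; congr EFin.
    rewrite mulrACA mulfV ?gt_eqF // mul1r -expRD; congr expR; by field; rewrite gt_eqF.
  over.
have pdf0 x : (0 <= (exponential_pdf b^-1 x)%:E)%E.
  by rewrite lee_fin exponential_pdf_ge0 // invr_ge0 ltW.
have cst0 : 0 <= b * expR (- t / b) by rewrite mulr_ge0 ?expR_ge0 ?ltW.
rewrite ge0_integralZl ?lee_fin //.
rewrite -[leRHS]mule1 lee_wpmul2l ?lee_fin //.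
rewrite -(integral_exponential_pdf (rate := b^-1)) ?invr_gt0 //.
apply: ge0_subset_integral => //.
by apply/measurable_EFinP; exact: measurable_exponential_pdf.
Qed.

End laplace.

Lemma measure_bigcup_fin_le d (T : measurableType d) (R : realType)
    (mu : {measure set T -> \bar R}) (I : finType) (Q : pred I) (F : I -> set T) :
  (forall i, Q i -> measurable (F i)) ->
  (mu (\bigcup_(i in [set i | Q i]) F i) <= \sum_(i | Q i) mu (F i))%E.
Proof.
move=> mF; have -> : [set i | Q i] = [set i | (i \in index_enum I) && Q i].
  by apply/seteqP; split => i /=; rewrite mem_index_enum.
rewrite bigcup_seq_cond; elim: (index_enum I) => [|i r IH]; first by rewrite !big_nil measure0.
rewrite !big_cons; case: ifP => // Qi.
apply: le_trans (measureU2 _ _ _) _; [exact: mF | exact: bigsetU_measurable |].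
exact: leeD.
Qed.

Section mechanism.
Variables (R : realType) (n k : nat) (s : 'I_k -> 'I_n) (c : 'I_n -> 'I_n -> R).
Variables (d : measure_display) (Omega : measurableType d) (P : probability Omega R).
Variables (Z : 'I_k -> 'I_n -> Omega -> R) (sel : Omega -> 'I_n -> 'I_k -> R) (b : R).
Hypotheses (cf : cost_fun c) (b0 : 0 < b).
Hypothesis Z_laplace : forall i u, u \notin codom s -> is_laplace P (Z i u) b.
Hypothesis sel_opt : forall w, is_noisy_opt c s (fun i u => Z i u w) (sel w).
Hypothesis measurable_energy : measurable_fun setT (fun w => energy c (sel w)).

Definition noise_excess (t : R) (w : Omega) : R :=
  \sum_(u < n | u \notin codom s) \sum_i excess t (Z i u w).

Lemma noise_excess_ge0 t w : 0 <= noise_excess t w.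
Proof. by apply: sumr_ge0 => u _; apply: sumr_ge0 => i _; exact: excess_ge0. Qed.

Definition node_excess (t : R) (u : 'I_n) (w : Omega) : R :=
  if u \notin codom s then \sum_i excess t (Z i u w) else 0.

Lemma noise_excessE t w : noise_excess t w = \sum_(u < n) node_excess t u w.
Proof. exact: big_mkcond. Qed.

Lemma node_excess_ge0 t u w : 0 <= node_excess t u w.
Proof.
by rewrite /node_excess; case: ifP => // _; apply: sumr_ge0 => i _; exact: excess_ge0.
Qed.

Lemma measurable_node_excess t u : measurable_fun setT (node_excess t u).
Proof.
rewrite /node_excess; case: (boolP (u \notin codom s)) => hu; last exact: measurable_cst.
apply: measurable_sum => i; apply: measurable_excess.
by have [] := Z_laplace i hu.
Qed.

Lemma measurable_noise_excess t : measurable_fun setT (noise_excess t).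
Proof.
rewrite (_ : noise_excess t = fun w => \sum_(u < n) node_excess t u w).
  by apply: measurable_sum => u; exact: measurable_node_excess.
by apply/funext => w; exact: noise_excessE.
Qed.

Lemma expectation_node_excess_le t u : 0 < t ->
  (\int[P]_w (node_excess t u w)%:E <= (k%:R * (b * expR (- t / b)))%:E)%E.
Proof.
move=> t0; have be0 : 0 <= b * expR (- t / b) by rewrite mulr_ge0 ?expR_ge0 ?ltW.
rewrite /node_excess; case: (boolP (u \notin codom s)) => hu; last first.
  by rewrite integral0 lee_fin mulr_ge0.
under eq_integral do rewrite -sumEFin.
rewrite ge0_integral_sum //; last first.
- by move=> i w _; rewrite lee_fin excess_ge0.
- move=> i; apply/measurable_EFinP; apply: measurable_excess.
  by have [] := Z_laplace i hu.
apply: le_trans.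
  by apply: lee_sum => i _; exact: expectation_excess_laplace_le b0 t0 (Z_laplace i hu).
by rewrite sumEFin sumr_const card_ord mulr_natl.
Qed.

Lemma expectation_noise_excess_le t : 0 < t ->
  (\int[P]_w (noise_excess t w)%:E <= (n%:R * (k%:R * (b * expR (- t / b))))%:E)%E.
Proof.
move=> t0; under eq_integral do rewrite noise_excessE -sumEFin.
rewrite ge0_integral_sum //; last first.
- by move=> u w _; rewrite lee_fin node_excess_ge0.
- by move=> u; apply/measurable_EFinP; exact: measurable_node_excess.
apply: (@le_trans _ _ (\sum_(u < n) (k%:R * (b * expR (- t / b)))%:E)%E).
  by apply: lee_sum => u _; exact: expectation_node_excess_le.
by rewrite sumEFin sumr_const card_ord !mulr_natl.
Qed.

Lemma expectation_energy_le t : 0 < t ->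
  (\int[P]_w (energy c (sel w))%:E <=
   (OPT c s + 4 * (n%:R * t + n%:R * (k%:R * (b * expR (- t / b)))))%:E)%E.
Proof.
move=> t0; set a := OPT c s + 4 * (n%:R * t).
have a0 : 0 <= a by rewrite /a addr_ge0 ?OPT_ge0 // !mulr_ge0 // ltW.
have bound w : energy c (sel w) <= a + 4 * noise_excess t w.
  by have := noisy_opt_energy_le (sel_opt w) (ltW t0); rewrite /a -/(noise_excess t w); lra.
apply: (@le_trans _ _ (\int[P]_w (a%:E + 4%:E * (noise_excess t w)%:E))%E).
  apply: ge0_le_integral => //.
  - by move=> w _; rewrite lee_fin energy_ge0.
  - exact/measurable_EFinP.
  - apply: emeasurable_funD; first exact: measurable_cst.
    apply: emeasurable_funM; first exact: measurable_cst.
    exact/measurable_EFinP/measurable_noise_excess.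
  - by move=> w _; rewrite -EFinM -EFinD lee_fin bound.
rewrite ge0_integralD //; last 2 first.
- by move=> w _; rewrite mule_ge0 ?lee_fin ?noise_excess_ge0.
- apply: emeasurable_funM; first exact: measurable_cst.
  exact/measurable_EFinP/measurable_noise_excess.
rewrite integral_cst // [X in (_ * X)%E](probability_setT P) mule1.
rewrite ge0_integralZl //; last 2 first.
- exact/measurable_EFinP/measurable_noise_excess.
- by move=> w _; rewrite lee_fin noise_excess_ge0.
have -> : (OPT c s + 4 * (n%:R * t + n%:R * (k%:R * (b * expR (- t / b)))))%:E =
    (a%:E + 4%:E * (n%:R * (k%:R * (b * expR (- t / b))))%:E)%E.
  by rewrite /a -EFinM -EFinD mulrDr addrA.
rewrite leeD2l // lee_pmul2l ?lte_fin //.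
exact: expectation_noise_excess_le.
Qed.

Lemma prob_energy_gap_gt t : 0 < t ->
  (P [set w | (4 * (n%:R * t) < energy c (sel w) - OPT c s)%R] <=
   ((n * k)%:R * expR (- t / b))%:E)%E.
Proof.
move=> t0; set E := [set w | _ < _].
have mE : measurable E.
  rewrite (_ : E = (fun w => energy c (sel w)) @^-1` `](OPT c s + 4 * (n%:R * t))%R, +oo[).
    by rewrite -[_ @^-1` _]setTI; exact: measurable_energy.
  by apply/seteqP; split => w; rewrite /E /= in_itv /= andbT; lra.
pose F (p : 'I_k * 'I_n) := [set w | t < `|Z p.1 p.2 w|].
have mF p : p.2 \notin codom s -> measurable (F p).
  by move=> hp; apply: measurable_norm_gt; have [] := Z_laplace p.1 hp.
have EF : E `<=` \bigcup_(p in [set p | p.2 \notin codom s]) F p.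
  move=> w Ew; apply: contrapT => noF.
  have small i u : u \notin codom s -> excess t (Z i u w) = 0.
    by move=> hu; apply: excess_eq0; rewrite leNgt; apply/negP => ?; apply: noF; exists (i, u).
  have := noisy_opt_energy_le (sel_opt w) (ltW t0); rewrite -/(noise_excess t w).
  rewrite (_ : noise_excess t w = 0) ?addr0; first by move: Ew; rewrite /E /=; lra.
  by apply: big1 => u hu; apply: big1 => i _; exact: small.
apply: le_trans (le_measure _ _ _ EF) _; rewrite ?inE //.
  by apply: fin_bigcup_measurable finite_finset _ => p; exact: mF.
apply: le_trans (measure_bigcup_fin_le _ mF) _.
apply: (@le_trans _ _ (\sum_(p | p.2 \notin codom s) (expR (- t / b))%:E)%E).
  apply: lee_sum => p hp; rewrite le_eqVlt; apply/orP; left; apply/eqP.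
  exact: laplace_tail b0 t0 (Z_laplace p.1 hp).
rewrite sumEFin sumr_const lee_fin -(mulr_natl (expR _)) ler_pM2r ?expR_gt0 // ler_nat.
by apply: leq_trans (max_card _) _; rewrite card_prod !card_ord mulnC.
Qed.

Lemma expectation_energy_le_ln : (2 <= k)%N ->
  (\int[P]_w (energy c (sel w))%:E <= (OPT c s + 4 * n%:R * b * (ln k%:R + 1))%:E)%E.
Proof.
move=> k2; have k0 : 0 < k%:R :> R by rewrite ltr0n (leq_trans _ k2).
have lnk0 : 0 < ln (k%:R : R) by rewrite ln_gt0 // ltr1n.
apply: le_trans (expectation_energy_le (mulr_gt0 b0 lnk0)) _.
have -> : expR (- (b * ln k%:R) / b) = k%:R^-1.
  by rewrite mulNr mulrAC mulfV ?gt_eqF // mul1r expRN lnK // posrE.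
rewrite lee_fin le_eqVlt; apply/orP; left; apply/eqP; field.
exact: lt0r_neq0.
Qed.

Lemma prob_energy_gap_gt_ln : (1 < n * k)%N ->
  (P [set w | (8 * n%:R * b * ln (n * k)%:R < energy c (sel w) - OPT c s)%R] <=
   ((n * k)%:R^-1)%:E)%E.
Proof.
move=> nk1; set N := (n * k)%:R : R.
have N1 : 1 < N by rewrite ltr1n.
have N0 : 0 < N by rewrite (lt_trans ltr01).
have lnN0 : 0 < ln N by rewrite ln_gt0.
have := prob_energy_gap_gt (t := 2 * b * ln N); rewrite !mulr_gt0 //.
have -> : - (2 * b * ln N) / b = - ln (N ^+ 2).
  by rewrite lnXn // -mulr_natl; field; rewrite gt_eqF.
rewrite expRN lnK ?posrE ?exprn_gt0 // -/N.
have -> : 4 * (n%:R * (2 * b * ln N)) = 8 * n%:R * b * ln N by ring.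
have -> : N / N ^+ 2 = N^-1 by rewrite expr2 invfM mulrA mulfV ?gt_eqF // mul1r.
by apply.
Qed.

End mechanism.

Theorem theorem4p6 (R : realType) :
  exists C1 C2 : R, 0 < C1 /\ 0 < C2 /\
  forall (eps : R) (n k : nat) (s : 'I_k -> 'I_n) (c : 'I_n -> 'I_n -> R)
    (d : measure_display) (Omega : measurableType d) (P : probability Omega R)
    (Z : 'I_k -> 'I_n -> Omega -> R)
    (sel : Omega -> 'I_n -> 'I_k -> R),
    0 < eps -> (2 <= k)%N -> (k <= n)%N ->
    injective s -> cost_fun c ->
    mutually_independent
      (fun p : 'I_k * 'I_n => p.2 \notin codom s) P (fun p => Z p.1 p.2) ->
    (forall i u, u \notin codom s ->
       is_laplace P (Z i u) (Num.sqrt 2 * k%:R / eps)) ->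
    (forall w, is_noisy_opt c s (fun i u => Z i u w) (sel w)) ->
    measurable_fun setT (fun w => energy c (sel w)) ->
    ((\int[P]_w (energy c (sel w))%:E - (OPT c s)%:E
        <= (C1 * (n%:R * k%:R * ln k%:R) / eps)%:E)%E /\
     (P [set w | (energy c (sel w) - OPT c s
                   > C2 * (n%:R * k%:R * ln (n%:R * k%:R)) / eps)%R]
        <= ((n * k)%:R^-1)%:E)%E).
Proof.
have ln2 : 0 < ln (2 : R) by rewrite ln_gt0 // ltr1n.
have sqrt2 : 0 < Num.sqrt (2 : R) by rewrite sqrtr_gt0.
exists (4 * Num.sqrt 2 * (1 + (ln 2)^-1)), (8 * Num.sqrt 2).
split; first by rewrite !mulr_gt0 // ltr_wpDr // ltW // invr_gt0.
split; first by rewrite mulr_gt0.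
move=> eps n k s c d Omega P Z sel eps0 k2 kn _ cf _ lap opt menergy.
set b := Num.sqrt 2 * k%:R / eps.
have k0 : 0 < k%:R :> R by rewrite ltr0n (leq_trans _ k2).
have b0 : 0 < b by rewrite !mulr_gt0 // invr_gt0.
split.
  rewrite lee_subel_addr //.
  apply: le_trans (expectation_energy_le_ln cf b0 lap opt menergy k2) _.
  rewrite addrC lee_fin lerD2r.
  have lnk : 1 <= ln k%:R / ln 2 :> R by rewrite ler_pdivlMr // mul1r ler_ln ?posrE // ler_nat.
  have -> : 4 * Num.sqrt 2 * (1 + (ln 2)^-1) * (n%:R * k%:R * ln k%:R) / eps =
            4 * n%:R * b * (ln k%:R + ln k%:R / ln 2) by rewrite /b; field; rewrite ?gt_eqF.
  apply: ler_wpM2l; last by rewrite lerD2l.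
  exact: mulr_ge0 (mulr_ge0 (ler0n _ 4) (ler0n _ n)) (ltW b0).
have nk1 : (1 < n * k)%N by rewrite (@leq_trans (1 * 2)) // leq_mul // (leq_trans _ kn) // ltnW.
have := prob_energy_gap_gt_ln b0 lap opt menergy nk1.
rewrite natrM (_ : 8 * n%:R * b * _ =
  8 * Num.sqrt 2 * (n%:R * k%:R * ln (n%:R * k%:R)) / eps) //.
by rewrite /b; field; exact: lt0r_neq0.
Qed.
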